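(* Let $s_B(\theta|\mathcal{X})\in\mathbb{R}^d$ be a fixed (learned) approximation of the posterior score $\nabla_\theta\log p(\theta|\mathcal{X})$ with $\mathbb{E}\|s_B(\theta|\mathcal{X})\|_2^2<\infty$ and $\mathbb{E}\|\nabla_\theta\log p(\theta|\mathcal{X})\|_2^2<\infty$, and assume $F_B\neq 0$. Let $\mathcal{L}_B=\mathbb{E}_{\theta,\mathcal{X}}\|s_B(\theta|\mathcal{X})-\nabla_\theta\log p(\theta|\mathcal{X})\|_2^2$, $\mathrm{sRE}_B=\mathcal{L}_B/\mathrm{Tr}(F_B)$ and $d_B=\mathrm{intdim}(F_B)$. If $d_B\cdot\mathrm{sRE}_B\le 0.16$, then $$\frac{\|\bar F_B-F_B\|_2}{\|F_B\|_2}\le 2.4\sqrt{d_B\cdot\mathrm{sRE}_B}.$$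
   Context: Setup: $\theta\in\Theta\subseteq\mathbb{R}^d$ is a random parameter with prior density $p(\theta)$; given $\theta$, $\mathcal{X}=\{X_i\}_{i=1}^{n}$ are i.i.d. observations with density $p(x|\theta)$; $p(\theta|\mathcal{X})$ is the posterior. The Bayesian Fisher information matrix is $F_B=\mathbb{E}_{\theta,\mathcal{X}}[\nabla_\theta\log p(\theta|\mathcal{X})\nabla_\theta\log p(\theta|\mathcal{X})^T]$, and the learned Bayesian FIM is $\bar F_B=\mathbb{E}_{\theta,\mathcal{X}}[s_B(\theta|\mathcal{X})s_B(\theta|\mathcal{X})^T]$. For a nonzero positive semidefinite matrix $A$, $\mathrm{intdim}(A)=\mathrm{Tr}(A)/\|A\|_2$ (intrinsic dimension); $\|\cdot\|_2$ is the spectral norm. *)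

From HB Require Import structures.
From mathcomp Require Import all_boot all_order all_algebra.
From mathcomp Require Import all_classical all_reals all_analysis.
Set Implicit Arguments. Unset Strict Implicit. Unset Printing Implicit Defensive.
Import Order.TTheory GRing.Theory Num.Theory.
Local Open Scope ring_scope.
Local Open Scope classical_set_scope.

Definition vnorm (R : realType) (d : nat) (v : 'rV[R]_d) : R :=
  Num.sqrt (\sum_(i < d) v 0 i ^+ 2).

(* Spectral norm ||A||_2 = sup_{||v||_2 <= 1} ||A v||_2 (operator 2-norm).
   Vectors are rows, so A v is written v *m A^T. *)
Definition spnorm (R : realType) (d : nat) (A : 'M[R]_d) : R :=
  sup [set vnorm (v *m A^T) | v in [set v : 'rV[R]_d | vnorm v <= 1]].

Definition intdim (R : realType) (d : nat) (A : 'M[R]_d) : R :=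
  \tr A / spnorm A.

Definition expect (dT : measure_display) (T : measurableType dT) (R : realType)
  (P : probability T R) (f : T -> R) : R :=
  fine (\int[P]_(t in setT) (f t)%:E)%E.

Definition second_moment (dT : measure_display) (T : measurableType dT)
  (R : realType) (P : probability T R) (d : nat) (v : T -> 'rV[R]_d) : 'M[R]_d :=
  \matrix_(i, j) expect P (fun t => v t 0 i * v t 0 j).

From HB Require Import structures.
From mathcomp Require Import all_boot all_order all_algebra.
From mathcomp Require Import all_classical all_reals all_analysis.
From mathcomp Require Import measurable_realfun ring lra.
Import Order.TTheory GRing.Theory Num.Theory.
Local Open Scope ring_scope.
Set Implicit Arguments. Unset Strict Implicit. Unset Printing Implicit Defensive.

(* Write Y = X + E with E = s_B - score.  For unit vectors u, v the bilinear form
   of E[Y Y^T] - E[X X^T] is E[(u.E)(v.E)] + E[(u.E)(v.X)] + E[(u.X)(v.E)], and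
   Cauchy-Schwarz bounds the three terms by L, sqrt(L N), sqrt(L N), where
   L = E|E|^2 and N = ||E[X X^T]||_2.  Hence ||Fbar_B - F_B||_2 <= L + 2 sqrt(L N),
   i.e. the relative error is at most z^2 + 2z with z = sqrt(L/N).  Since
   Tr F_B >= N > 0 the trace cancels in d_B sRE_B = L/N, so z <= 0.4 and
   z^2 + 2z <= 2.4 z. *)

Lemma integrable_sqr_Lfun2 (d : measure_display) (T : measurableType d)
    (R : realType) (mu : {measure set T -> \bar R}) (f : T -> R) :
  measurable_fun setT f -> mu.-integrable setT (EFin \o (fun x => f x ^+ 2)) ->
  f \in Lfun mu 2%:E.
Proof.
move=> mf /integrableP[_ If]; rewrite inE; apply/andP; split; rewrite inE //=.
have sqrE x : (`|(f x)%:E| `^ 2 = `|(f x ^+ 2)%:E|)%E.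
  rewrite !abse_EFin poweR_EFin powR_mulrn //; congr EFin.
  by rewrite normrX.
rewrite /finite_norm unlock /Lnorm poweR_lty //; apply: le_lt_trans If.
by under eq_integral do rewrite sqrE.
Qed.

Section real_expectation.
Context (dT : measure_display) (T : measurableType dT) (R : realType)
  (P : probability T R).
Implicit Types f g : T -> R.

Lemma expectE f : expect P f = fine 'E_P[f].
Proof. by rewrite /expect unlock. Qed.

Lemma expectD f g : f \in Lfun P 1 -> g \in Lfun P 1 ->
  expect P (f \+ g) = expect P f + expect P g.
Proof.
by move=> f1 g1; rewrite !expectE expectationD // fineD // expectation_fin_num.
Qed.

Lemma expectZl k f : f \in Lfun P 1 -> expect P (k \o* f) = k * expect P f.
Proof. by move=> f1; rewrite !expectE expectationZl // fineM // expectation_fin_num. Qed.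

Lemma expect_sum (I : Type) (r : seq I) (F : I -> T -> R) :
  (forall i, F i \in Lfun P 1) ->
  expect P (\sum_(i <- r) F i) = \sum_(i <- r) expect P (F i).
Proof.
move=> F1; elim: r => [|i r IHr].
  by rewrite !big_nil expectE expectation_cst.
by rewrite !big_cons expectD ?IHr ?rpred_sum.
Qed.

Lemma expect_ge0 f : (forall t, 0 <= f t) -> 0 <= expect P f.
Proof. by move=> f0; rewrite expectE fine_ge0 // expectation_ge0. Qed.

Lemma ler_expect f g : f \in Lfun P 1 -> g \in Lfun P 1 ->
  (forall t, f t <= g t) -> expect P f <= expect P g.
Proof.
move=> f1 g1 fg; rewrite !expectE fine_le ?expectation_fin_num //.
rewrite unlock; apply: le_integral => //; try exact/Lfun1_integrable.
by move=> t _; rewrite lee_fin.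
Qed.

End real_expectation.

Lemma quadratic_ge0_sqr_le (R : realFieldType) (a b c : R) : 0 <= c ->
  (forall l, 0 <= a + 2 * l * b + l ^+ 2 * c) -> b ^+ 2 <= a * c.
Proof.
move=> c0 q0; have [c_eq0|c_neq0] := eqVneq c 0.
  rewrite c_eq0 in q0 *.
  have [->|b_neq0] := eqVneq b 0; first by rewrite expr0n mulr0.
  have := q0 (- (a + 1) / (2 * b)).
  have -> : a + 2 * (- (a + 1) / (2 * b)) * b + (- (a + 1) / (2 * b)) ^+ 2 * 0
            = -1 by field.
  by rewrite ler0N1.
have c_gt0 : 0 < c by rewrite lt_def c_neq0.
have := q0 (- b / c).
have -> : a + 2 * (- b / c) * b + (- b / c) ^+ 2 * c = (a * c - b ^+ 2) / c.
  by field.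
by rewrite pmulr_lge0 ?invr_gt0 // subr_ge0.
Qed.

Section square_integrable.
Context (dT : measure_display) (T : measurableType dT) (R : realType)
  (P : probability T R).
Implicit Types f g : T -> R.

Lemma expect_sqr_ge0 f : 0 <= expect P (f \* f).
Proof. by apply: expect_ge0 => t /=; rewrite -expr2 sqr_ge0. Qed.

Lemma expect_mul_sqr_le f g : f \in Lfun P 2%:E -> g \in Lfun P 2%:E ->
  expect P (f \* g) ^+ 2 <= expect P (f \* f) * expect P (g \* g).
Proof.
move=> f2 g2; apply: quadratic_ge0_sqr_le => [|l]; first exact: expect_sqr_ge0.
have ff := Lfun2_mul_Lfun1 f2 f2; have fg := Lfun2_mul_Lfun1 f2 g2.
have gg := Lfun2_mul_Lfun1 g2 g2.
rewrite -!expectZl // -!expectD ?rpredD ?Lfun_scale //.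
apply: expect_ge0 => t /=.
have -> : f t * f t + f t * g t * (2 * l) + g t * g t * l ^+ 2
          = (f t + l * g t) ^+ 2 by ring.
exact: sqr_ge0.
Qed.

Lemma expect_mul_le f g a b p q : f \in Lfun P 2%:E -> g \in Lfun P 2%:E ->
  0 <= a -> 0 <= b -> 0 <= p -> 0 <= q ->
  expect P (f \* f) <= a ^+ 2 * p -> expect P (g \* g) <= b ^+ 2 * q ->
  expect P (f \* g) <= a * b * Num.sqrt (p * q).
Proof.
move=> f2 g2 a0 b0 p0 q0 ffp ggq; rewrite (le_trans (ler_norm _)) //.
rewrite -sqrtr_sqr -[a * b]ger0_norm ?mulr_ge0 // -sqrtr_sqr -sqrtrM ?sqr_ge0 //.
rewrite ler_sqrt ?mulr_ge0 ?sqr_ge0 //; apply: le_trans (expect_mul_sqr_le f2 g2) _.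
rewrite exprMn mulrACA; exact: ler_pM (expect_sqr_ge0 _) (expect_sqr_ge0 _) _ _.
Qed.
End square_integrable.

Section euclidean_rows.
Local Open Scope classical_set_scope.
Context (R : realType) (d : nat).
Implicit Types (u v w : 'rV[R]_d) (A : 'M[R]_d).

Definition dot u v := \sum_(i < d) u 0 i * v 0 i.

Lemma dot_ge0 v : 0 <= dot v v.
Proof. by apply: sumr_ge0 => i _; rewrite -expr2 sqr_ge0. Qed.

Lemma vnorm_ge0 v : 0 <= vnorm v.
Proof. exact: sqrtr_ge0. Qed.

Lemma vnorm_sqr v : vnorm v ^+ 2 = dot v v.
Proof.
rewrite sqr_sqrtr; last by apply: sumr_ge0 => i _; rewrite sqr_ge0.
by apply: eq_bigr => i _; rewrite expr2.
Qed.

Lemma vnorm0 : vnorm (0 : 'rV[R]_d) = 0.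
Proof. by rewrite /vnorm big1 ?sqrtr0 // => i _; rewrite mxE expr0n. Qed.

Lemma vnormZ k v : vnorm (k *: v) = `|k| * vnorm v.
Proof.
rewrite /vnorm -sqrtr_sqr -sqrtrM ?sqr_ge0 // mulr_sumr.
by congr Num.sqrt; apply: eq_bigr => i _; rewrite mxE exprMn.
Qed.

Lemma dotBr u v w : dot u (v - w) = dot u v - dot u w.
Proof. by rewrite /dot -sumrB; apply: eq_bigr => i _; rewrite !mxE mulrBr. Qed.

Lemma dot_sqr_le u v : dot u v ^+ 2 <= vnorm u ^+ 2 * vnorm v ^+ 2.
Proof.
rewrite !vnorm_sqr; apply: quadratic_ge0_sqr_le => [|l]; first exact: dot_ge0.
have -> : dot u u + 2 * l * dot u v + l ^+ 2 * dot v v =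
          \sum_(i < d) (u 0 i + l * v 0 i) ^+ 2.
  by rewrite /dot !mulr_sumr -!big_split; apply: eq_bigr => i _ /=; ring.
by apply: sumr_ge0 => i _; rewrite sqr_ge0.
Qed.

Lemma dot_le_vnorm u v : dot u v <= vnorm u * vnorm v.
Proof.
apply: le_trans (ler_norm _) _.
rewrite -sqrtr_sqr -(ger0_norm (mulr_ge0 (vnorm_ge0 u) (vnorm_ge0 v))) -sqrtr_sqr.
by rewrite ler_sqrt ?sqr_ge0 // exprMn dot_sqr_le.
Qed.

Lemma coord_sqr_le v i : v 0 i ^+ 2 <= vnorm v ^+ 2.
Proof.
rewrite vnorm_sqr /dot (bigD1 i) //= -expr2 lerDl.
by apply: sumr_ge0 => j _; rewrite -expr2 sqr_ge0.
Qed.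

Lemma mulmx_trE v A j : (v *m A^T) 0 j = dot v (row j A).
Proof. by rewrite !mxE; apply: eq_bigr => i _; rewrite !mxE. Qed.

Lemma vnorm_mulmx_le_frobenius v A :
  vnorm (v *m A^T) <= vnorm v * Num.sqrt (\sum_(j < d) vnorm (row j A) ^+ 2).
Proof.
rewrite -(ger0_norm (vnorm_ge0 v)) -sqrtr_sqr -sqrtrM ?sqr_ge0 //.
rewrite [vnorm (_ *m _)]/vnorm ler_sqrt; last first.
  by rewrite mulr_ge0 ?sqr_ge0 ?sumr_ge0 // => j _; rewrite sqr_ge0.
by rewrite mulr_sumr; apply: ler_sum => j _; rewrite mulmx_trE dot_sqr_le.
Qed.

Lemma spnorm_has_sup A :
  has_sup [set vnorm (v *m A^T) | v in [set v | vnorm v <= 1]].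
Proof.
split; first by exists (vnorm (0 *m A^T)), 0; rewrite //= vnorm0.
exists (Num.sqrt (\sum_(j < d) vnorm (row j A) ^+ 2)) => _ [v /= v_le1 <-].
rewrite (le_trans (vnorm_mulmx_le_frobenius v A)) // ler_piMl // sqrtr_ge0.
Qed.

Lemma spnorm_ub v A : vnorm v <= 1 -> vnorm (v *m A^T) <= spnorm A.
Proof. by move=> v_le1; apply: sup_upper_bound (spnorm_has_sup A) _ _; exists v. Qed.

Lemma spnorm_le A c :
  (forall v, vnorm v <= 1 -> vnorm (v *m A^T) <= c) -> spnorm A <= c.
Proof.
move=> Ac; apply: ge_sup => [|_ [v /= v_le1 <-]]; last exact: Ac.
by case: (spnorm_has_sup A).
Qed.

Lemma spnorm_ge0 A : 0 <= spnorm A.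
Proof. by rewrite (le_trans (vnorm_ge0 (0 *m A^T))) ?spnorm_ub ?vnorm0. Qed.

Lemma vnorm_mulmx_le v A : vnorm (v *m A^T) <= spnorm A * vnorm v.
Proof.
have [v0|v_neq0] := eqVneq (vnorm v) 0.
  by rewrite v0 mulr0 (le_trans (vnorm_mulmx_le_frobenius v A)) // v0 mul0r.
have v_gt0 : 0 < vnorm v by rewrite lt_def v_neq0 vnorm_ge0.
have nv_ge0 : 0 <= (vnorm v)^-1 by rewrite invr_ge0 vnorm_ge0.
have := @spnorm_ub ((vnorm v)^-1 *: v) A.
rewrite -scalemxAl !vnormZ ger0_norm // mulVf // lexx => /(_ isT).
by rewrite ler_pdivrMl // mulrC.
Qed.

Lemma spnorm_le_bilinear A c : 0 <= c ->
  (forall u v, dot u (v *m A^T) <= c * (vnorm u * vnorm v)) -> spnorm A <= c.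
Proof.
move=> c0 Ac; apply: spnorm_le => v v_le1; set u := v *m A^T.
have [u0|u_neq0] := eqVneq (vnorm u) 0; first by rewrite u0.
have u_gt0 : 0 < vnorm u by rewrite lt_def u_neq0 vnorm_ge0.
rewrite -(ler_pM2l u_gt0) -expr2 vnorm_sqr (le_trans (Ac u v)) //.
by rewrite mulrCA ler_wpM2l ?vnorm_ge0 // ler_piMr.
Qed.

Lemma dot_mulmx_le_spnorm a A : dot a (a *m A^T) <= spnorm A * vnorm a ^+ 2.
Proof.
rewrite (le_trans (dot_le_vnorm _ _)) // expr2 mulrA [X in _ <= X]mulrC.
by rewrite ler_wpM2l ?vnorm_ge0 // vnorm_mulmx_le.
Qed.
End euclidean_rows.

Section random_row_vectors.
Context (dT : measure_display) (T : measurableType dT) (R : realType)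
  (P : probability T R) (d : nat).
Implicit Types (X Y : T -> 'rV[R]_d) (a b u v : 'rV[R]_d).

Definition square_integrable X := forall i, (fun t => X t 0 i) \in Lfun P 2%:E.

Lemma square_integrable_vnorm X :
  (forall i, measurable_fun setT (fun t => X t 0 i)) ->
  P.-integrable setT (fun t => (vnorm (X t) ^+ 2)%:E) -> square_integrable X.
Proof.
move=> mX X2 i; apply: integrable_sqr_Lfun2 => //.
apply: le_integrable X2 => //; first by apply/measurable_EFinP; exact: measurable_funX.
by move=> t _; rewrite /= lee_fin !ger0_norm ?sqr_ge0 ?coord_sqr_le.
Qed.

Lemma square_integrableB X Y : square_integrable X -> square_integrable Y ->
  square_integrable (fun t => X t - Y t).
Proof.
move=> X2 Y2 i; rewrite (_ : (fun t => _) = (fun t => X t 0 i) - (fun t => Y t 0 i)).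
  by rewrite rpredB ?lee1n.
by apply: funext => t; rewrite !mxE.
Qed.

Lemma Lfun2_dot a X : square_integrable X -> (fun t => dot a (X t)) \in Lfun P 2%:E.
Proof.
move=> X2; rewrite (_ : (fun t => _) = \sum_(i < d) a 0 i *: (fun t => X t 0 i)).
  by rewrite rpred_sum ?lee1n // => ? i _; rewrite rpredZ.
by apply: funext => t; rewrite fct_sumE; apply: eq_bigr => i _.
Qed.

Lemma dot_second_moment a b X : square_integrable X ->
  dot a (b *m (second_moment P X)^T) =
  expect P (fun t => dot a (X t) * dot b (X t)).
Proof.
move=> X2; pose F j i := (a 0 j * b 0 i) \o* ((fun t => X t 0 j) \* (fun t => X t 0 i)).
have F1 j i : F j i \in Lfun P 1 by rewrite Lfun_scale ?Lfun2_mul_Lfun1.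
rewrite (_ : (fun t => _) = \sum_j \sum_i F j i); last first.
  apply: funext => t; rewrite /dot mulr_suml fct_sumE; apply: eq_bigr => j _.
  rewrite mulr_sumr fct_sumE; apply: eq_bigr => i _; rewrite /F /=; ring.
rewrite expect_sum => [|j]; last by rewrite rpred_sum.
apply: eq_bigr => j _; rewrite mulmx_trE /dot mulr_sumr expect_sum //.
by apply: eq_bigr => i _; rewrite expectZl ?Lfun2_mul_Lfun1 // !mxE; ring.
Qed.

Lemma Lfun1_vnorm_sqr X : square_integrable X ->
  (fun t => vnorm (X t) ^+ 2) \in Lfun P 1.
Proof.
move=> X2; rewrite (_ : (fun t => _) =
  \sum_i (fun t => X t 0 i) \* (fun t => X t 0 i)); last first.
  by apply: funext => t; rewrite vnorm_sqr fct_sumE.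
by rewrite rpred_sum // => i _; rewrite Lfun2_mul_Lfun1.
Qed.

Lemma trace_second_moment X : square_integrable X ->
  \tr (second_moment P X) = expect P (fun t => vnorm (X t) ^+ 2).
Proof.
move=> X2; rewrite (_ : (fun t => _) =
  \sum_i (fun t => X t 0 i) \* (fun t => X t 0 i)); last first.
  by apply: funext => t; rewrite vnorm_sqr fct_sumE.
rewrite expect_sum => [|i]; last by rewrite Lfun2_mul_Lfun1.
by apply: eq_bigr => i _; rewrite mxE.
Qed.

Lemma expect_dot_sqr_le_spnorm a X : square_integrable X ->
  expect P (fun t => dot a (X t) * dot a (X t)) <=
  vnorm a ^+ 2 * spnorm (second_moment P X).
Proof.
by move=> X2; rewrite -dot_second_moment // mulrC dot_mulmx_le_spnorm.
Qed.

Lemma expect_dot_sqr_le a X : square_integrable X ->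
  expect P (fun t => dot a (X t) * dot a (X t)) <=
  vnorm a ^+ 2 * expect P (fun t => vnorm (X t) ^+ 2).
Proof.
move=> X2; rewrite -expectZl ?Lfun1_vnorm_sqr //.
apply: ler_expect => [||t /=].
- exact: Lfun2_mul_Lfun1 (Lfun2_dot _ X2) (Lfun2_dot _ X2).
- by rewrite Lfun_scale ?Lfun1_vnorm_sqr.
- by rewrite -expr2 mulrC dot_sqr_le.
Qed.

Lemma spnorm_second_moment_le_trace X : square_integrable X ->
  spnorm (second_moment P X) <= \tr (second_moment P X).
Proof.
move=> X2; rewrite trace_second_moment //.
have e0 : 0 <= expect P (fun t => vnorm (X t) ^+ 2).
  by apply: expect_ge0 => t; rewrite sqr_ge0.
apply: spnorm_le_bilinear => // u v; rewrite dot_second_moment //.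
apply: le_trans (expect_mul_le (Lfun2_dot u X2) (Lfun2_dot v X2) (vnorm_ge0 u)
  (vnorm_ge0 v) e0 e0 (expect_dot_sqr_le u X2) (expect_dot_sqr_le v X2)) _.
by rewrite -expr2 sqrtr_sqr ger0_norm // mulrC.
Qed.

Lemma spnorm_second_moment_sub_le X Y :
  square_integrable X -> square_integrable Y ->
  spnorm (second_moment P Y - second_moment P X) <=
  expect P (fun t => vnorm (Y t - X t) ^+ 2) + 2 *
  Num.sqrt (expect P (fun t => vnorm (Y t - X t) ^+ 2) * spnorm (second_moment P X)).
Proof.
move=> X2 Y2; set E := fun t => Y t - X t.
set L := expect P _; set N := spnorm (second_moment P X).
have E2 : square_integrable E by apply: square_integrableB.
have L0 : 0 <= L by apply: expect_ge0 => t; rewrite sqr_ge0.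
have N0 : 0 <= N by apply: spnorm_ge0.
apply: spnorm_le_bilinear => [|u v]; first by rewrite addr_ge0 ?mulr_ge0 ?sqrtr_ge0.
have dotE w t : dot w (Y t) = dot w (X t) + dot w (E t) by rewrite dotBr addrC subrK.
rewrite linearB mulmxBr dotBr !dot_second_moment //.
have uX := Lfun2_dot u X2; have vX := Lfun2_dot v X2.
have uE := Lfun2_dot u E2; have vE := Lfun2_dot v E2.
have -> : expect P (fun t => dot u (Y t) * dot v (Y t)) =
    expect P (fun t => dot u (X t) * dot v (X t)) +
   (expect P (fun t => dot u (E t) * dot v (E t)) +
    expect P (fun t => dot u (E t) * dot v (X t)) +
    expect P (fun t => dot u (X t) * dot v (E t))).
  rewrite -!expectD ?rpredD ?Lfun2_mul_Lfun1 //.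
  by congr expect; apply: funext => t /=; rewrite !dotE; ring.
rewrite addrC addKr.
have nu := vnorm_ge0 u; have nv := vnorm_ge0 v.
have EE := expect_mul_le uE vE nu nv L0 L0 (expect_dot_sqr_le u E2) (expect_dot_sqr_le v E2).
have EX := expect_mul_le uE vX nu nv L0 N0 (expect_dot_sqr_le u E2)
  (expect_dot_sqr_le_spnorm v X2).
have XE := expect_mul_le uX vE nu nv N0 L0 (expect_dot_sqr_le_spnorm u X2)
  (expect_dot_sqr_le v E2).
rewrite -expr2 sqrtr_sqr ger0_norm // in EE; rewrite [N * L]mulrC in XE.
have -> : (L + 2 * Num.sqrt (L * N)) * (vnorm u * vnorm v) =
  vnorm u * vnorm v * L + vnorm u * vnorm v * Num.sqrt (L * N) +
  vnorm u * vnorm v * Num.sqrt (L * N) by ring.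
by rewrite !lerD.
Qed.
End random_row_vectors.

Lemma relative_error_le (R : rcfType) (L N : R) : 0 <= L -> 0 < N ->
  L / N <= 16 / 100 ->
  (L + 2 * Num.sqrt (L * N)) / N <= 24 / 10 * Num.sqrt (L / N).
Proof.
move=> L0 N_gt0 LN_le; set z := Num.sqrt (L / N).
have z0 : 0 <= z := sqrtr_ge0 _.
have zE : z ^+ 2 = L / N by rewrite sqr_sqrtr // divr_ge0 // ltW.
have LE : L = z ^+ 2 * N by rewrite zE mulfVK ?gt_eqF.
have -> : Num.sqrt (L * N) = z * N.
  by rewrite LE -mulrA -expr2 sqrtrM ?sqr_ge0 // !sqrtr_sqr !ger0_norm // ltW.
have -> : (L + 2 * (z * N)) / N = z ^+ 2 + 2 * z.
  by rewrite LE; field; rewrite gt_eqF.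
have z_le : z <= 2 / 5.
  by rewrite -ler_sqr ?nnegrE // zE (le_trans LN_le) // expr2; lra.
nra.
Qed.

Theorem mainTheorem2 (dT : measure_display) (T : measurableType dT)
  (R : realType) (P : probability T R) (d : nat)
  (score sB : T -> 'rV[R]_d)
  (score_meas : forall i : 'I_d, measurable_fun setT (fun t => score t 0 i))
  (sB_meas : forall i : 'I_d, measurable_fun setT (fun t => sB t 0 i))
  (score_L2 : P.-integrable setT (fun t => ((vnorm (score t)) ^+ 2)%:E))
  (sB_L2 : P.-integrable setT (fun t => ((vnorm (sB t)) ^+ 2)%:E)) :
  let F_B := second_moment P score in
  let Fbar_B := second_moment P sB in
  let L_B := expect P (fun t => (vnorm (sB t - score t)) ^+ 2) in
  let sRE_B := L_B / \tr F_B in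
  let d_B := intdim F_B in
  F_B != 0 ->
  d_B * sRE_B <= 16 / 100 ->
  spnorm (Fbar_B - F_B) / spnorm F_B <= 24 / 10 * Num.sqrt (d_B * sRE_B).
Proof.
move=> F_B Fbar_B L_B sRE_B d_B _ small.
have score2 := square_integrable_vnorm score_meas score_L2.
have sB2 := square_integrable_vnorm sB_meas sB_L2.
have L0 : 0 <= L_B by apply: expect_ge0 => t; rewrite sqr_ge0.
have [N0|N_gt0] := eqVneq (spnorm F_B) 0.
  by rewrite N0 invr0 mulr0 mulr_ge0 ?sqrtr_ge0.
have {}N_gt0 : 0 < spnorm F_B by rewrite lt_def N_gt0 spnorm_ge0.
have tr_gt0 : 0 < \tr F_B.
  by rewrite (lt_le_trans N_gt0) ?spnorm_second_moment_le_trace.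
have dsE : d_B * sRE_B = L_B / spnorm F_B.
  by rewrite /d_B /sRE_B /intdim; field; rewrite !gt_eqF.
rewrite dsE in small *; apply: le_trans (relative_error_le L0 N_gt0 small).
by rewrite ler_wpM2r ?invr_ge0 ?spnorm_ge0 ?spnorm_second_moment_sub_le.
Qed.
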